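(* Let $G$ be a simple graph of order $n$ and let $\alpha\ge2$ be an integer. If $\lambda(G)\le\frac{n}{\alpha}$, then $$i_\alpha(G)\ge\left(\frac{1}{\alpha(\alpha-1)}-\frac{1}{n}\right)\frac{(\alpha-1)(\alpha-2)}{\alpha}\left(\frac{n}{\alpha-1}\right)^{\alpha}.$$
   Context: $\lambda(G)$ is the spectral radius of the adjacency matrix of $G$. For a positive integer $s$, $i_s(G)$ denotes the number of independent sets of size $s$ in $G$. *)

From HB Require Import structures.
From mathcomp Require Import all_boot all_order all_algebra all_field.
Set Implicit Arguments. Unset Strict Implicit. Unset Printing Implicit Defensive.
Import Order.TTheory GRing.Theory Num.Theory.
Local Open Scope ring_scope.

Definition simple_graph (n : nat) (e : rel 'I_n) : Prop :=
  symmetric e /\ irreflexive e.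

Definition adjmx (n : nat) (e : rel 'I_n) : 'M[algC]_n :=
  \matrix_(i, j) (e i j)%:R.

(* The multiset of eigenvalues (roots of the characteristic polynomial,
   with multiplicity) of a square matrix over algC. *)
Definition eigenvalues (n : nat) (A : 'M[algC]_n) : seq algC :=
  sval (closed_field_poly_normal (char_poly A)).

(* Spectral radius: the maximum modulus of an eigenvalue (0 if n = 0). *)
Definition spectral_radius (n : nat) (A : 'M[algC]_n) : algC :=
  \big[Num.max/0]_(z <- eigenvalues A) `|z|.

Definition lambda_G (n : nat) (e : rel 'I_n) : algC := spectral_radius (adjmx e).

Definition indep_count (n : nat) (e : rel 'I_n) (s : nat) : nat :=
  #|[set S : {set 'I_n} | (#|S| == s)%N &&
        [forall x in S, forall y in S, ~~ e x y]]|.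

From HB Require Import structures.
From mathcomp Require Import all_boot all_order all_algebra all_field.
From mathcomp Require Import zify ring lra.
Set Implicit Arguments. Unset Strict Implicit. Unset Printing Implicit Defensive.
Import Order.TTheory GRing.Theory Num.Theory.

(* Write k s for the number of independent
   s-sets and S = 2|E| for the number of ordered adjacent pairs.

   1. Counting.  Double counting the pairs (L, x), with L an independent s-set
      and x a vertex extending it, plus Cauchy-Schwarz on the numbers of
      extensions, gives the recurrence
        (s+1)^2 (k (s+1))^2 <= k s (n k (s+1) + s (s+2) k (s+2)),
      and moreover k 1 = n and 2 k 2 + S = n (n - 1).
   2. Spectral bound.  For a normal matrix A, |sum_ij A_ij| <= n rho(A), by
      expanding the all-ones vector in an orthonormal eigenbasis; hence
      S <= n lambda(G) and S alpha <= n^2.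
   3. Numerics, over any real field.  With c = 1/n + 1/alpha the recurrence
      propagates the base case n (1 - c) k 1 <= 2 k 2 to the linear bounds
      n (1 - (s+1) c) k (s+1) <= (s+2) k (s+2); iterating them gives
      k t >= C(r, t) (n/r)^t for r = alpha - 1, and one more step followed by
      a rescaling yields the bound. *)

Lemma cauchy_schwarz_nat (I : finType) (P : pred I) (c : I -> nat) :
  (\sum_(i | P i) c i) ^ 2 <= (\sum_(i | P i) 1) * \sum_(i | P i) c i ^ 2.
Proof.
have amgm a b : 2 * (a * b) <= a ^ 2 + b ^ 2.
  by have [+ _] := nat_AGM2 a b; rewrite sqrnD; lia.
have -> : (\sum_(i | P i) c i) ^ 2 = \sum_(i | P i) \sum_(j | P j) c i * c j.
  by rewrite expnS expn1 big_distrl; apply: eq_bigr => i _; rewrite big_distrr.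
rewrite big_distrl /= -(leq_pmul2l (isT : 0 < 2)) big_distrr /=.
apply: (@leq_trans (\sum_(i | P i) \sum_(j | P j) (c i ^ 2 + c j ^ 2))).
  apply: leq_sum => i _; rewrite big_distrr /=; apply: leq_sum => j _.
  exact: amgm.
under eq_bigr => i _ do rewrite big_split /=.
rewrite big_split /= exchange_big /= mul2n -addnn.
by apply: leq_add; apply: eq_leq; apply: eq_bigr => i _; rewrite mul1n.
Qed.

Section IndependentSets.
Variables (n : nat) (e : rel 'I_n).

(* S is an independent set of the graph e (no loops inside S either). *)
Definition independent (S : {set 'I_n}) : bool :=
  [forall x in S, forall y in S, ~~ e x y].

Definition indep_of_size (s : nat) (S : {set 'I_n}) : bool :=
  (#|S| == s) && independent S.

Definition extension_count (L : {set 'I_n}) : nat :=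
  \sum_x ((x \notin L) && independent (x |: L) : nat).

Lemma independentP (S : {set 'I_n}) :
  reflect (forall a b, a \in S -> b \in S -> ~~ e a b) (independent S).
Proof.
apply: (iffP idP) => [S_indep a b aS|S_indep].
  by move: S_indep => /forallP/(_ a)/implyP/(_ aS)/forallP/(_ b)/implyP.
apply/forallP => a; apply/implyP => aS.
by apply/forallP => b; apply/implyP; apply: S_indep.
Qed.

Lemma independent_subset (A B : {set 'I_n}) :
  A \subset B -> independent B -> independent A.
Proof.
move=> /subsetP AB /independentP B_indep; apply/independentP => a b aA bA.
by apply: B_indep; apply: AB.
Qed.

Lemma indep_count_sum s : indep_count e s = \sum_(S | indep_of_size s S) 1.
Proof. by rewrite sum1dep_card. Qed.

(* Double counting: the pairs (L, x) with L an independent s-set and x an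
   extension of L correspond to the pairs (K, w) with K an independent
   (s+1)-set and w \in K, via K = x |: L and L = K :\ w. *)
Lemma double_count s (f : {set 'I_n} -> nat) :
  \sum_(L | indep_of_size s L) extension_count L * f L =
  \sum_(K | indep_of_size s.+1 K) \sum_(w in K) f (K :\ w).
Proof.
transitivity (\sum_(L | indep_of_size s L)
   \sum_(x | (x \notin L) && independent (x |: L)) f L).
  apply: eq_bigr => L _; rewrite /extension_count big_distrl /= [RHS]big_mkcond.
  by apply: eq_bigr => x _; case: ifP => _; rewrite ?mul1n ?mul0n.
rewrite pair_big_dep [RHS]pair_big_dep /=.
rewrite (reindex_onto (fun p : {set 'I_n} * 'I_n => (p.1 :\ p.2, p.2))
                     (fun p : {set 'I_n} * 'I_n => (p.2 |: p.1, p.2))) /=; last first.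
  by move=> [L x] /= /andP[_ /andP[xL _]]; rewrite setU1K.
apply: eq_bigl => [[K w]] /=.
have [wK|wK] := boolP (w \in K); last first.
  rewrite andbF; apply/negbTE/negP => /andP[_ /eqP[]] KwK.
  by move: wK; rewrite -KwK setU11.
rewrite setD1K // eqxx !andbT setD11 /=.
rewrite /indep_of_size [#|K|](cardsD1 w) wK add1n eqSS -andbA.
case K_indep: (independent K); rewrite ?andbF //.
by rewrite (independent_subset _ K_indep) ?subsetDl.
Qed.

(* If x extends both K minus w1 and K minus w2 (w1 != w2) to independent sets,
   then it extends K itself: every pair of vertices of x |: K avoids w1 or w2. *)
Lemma independent_of_two_drops (K : {set 'I_n}) x w1 w2 :
  independent K -> w1 \in K -> w2 \in K -> w1 != w2 ->
  independent (x |: (K :\ w1)) -> independent (x |: (K :\ w2)) ->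
  independent (x |: K).
Proof.
move=> /independentP K_indep w1K w2K w12 /independentP indep1 /independentP indep2.
have drop_mem w a : a \in x |: K -> a != w -> a \in x |: (K :\ w).
  by rewrite !inE => /orP[->|aK] aw; rewrite ?aw ?aK ?orbT.
apply/independentP => a b aX bX.
have [/andP[aw1 bw1]|ab_w1] := boolP ((a != w1) && (b != w1)).
  by apply: indep1; apply: drop_mem.
have [/andP[aw2 bw2]|ab_w2] := boolP ((a != w2) && (b != w2)).
  by apply: indep2; apply: drop_mem.
move: ab_w1 ab_w2; rewrite !negb_and !negbK.
by move=> /orP[]/eqP ? /orP[]/eqP ?; subst; rewrite ?eqxx in w12; apply: K_indep.
Qed.

Lemma drop_extensions_le s (K : {set 'I_n}) x : indep_of_size s.+1 K ->
  \sum_(w in K) ((x \notin K :\ w) && independent (x |: (K :\ w)) : nat)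
  <= 1 + s * ((x \notin K) && independent (x |: K)).
Proof.
move=> /andP[/eqP K_card K_indep].
set W := [set w in K | (x \notin K :\ w) && independent (x |: (K :\ w))].
have -> : \sum_(w in K) ((x \notin K :\ w) && independent (x |: (K :\ w)) : nat)
    = #|W|.
  rewrite -sum1_card [RHS]big_mkcond [LHS]big_mkcond /=; apply: eq_bigr => w _.
  by rewrite /W [in RHS]in_set; case: (w \in K) => //=; case: (_ && _).
have [xK|_] := boolP (x \in K).
  apply: leq_trans (leq_addr _ _); rewrite -(cards1 x).
  apply/subset_leq_card/subsetP => w; rewrite !inE xK andbT negbK => /and3P[_ xw _].
  by rewrite eq_sym.
have [xK_indep|xK_dep] /= := boolP (independent (x |: K)).
  rewrite muln1 add1n -K_card; apply/subset_leq_card/subsetP => w.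
  by rewrite inE => /andP[].
rewrite muln0 addn0 leqNgt; apply/negP => /card_gt1P [w1 [w2 [w1W w2W w12]]].
move: w1W w2W; rewrite !inE => /and3P[w1K _ indep1] /and3P[w2K _ indep2].
by move/negP: xK_dep; apply; apply: (independent_of_two_drops K_indep w1K w2K w12).
Qed.

Lemma sum_drop_extension_count s (K : {set 'I_n}) : indep_of_size s.+1 K ->
  \sum_(w in K) extension_count (K :\ w) <= n + s * extension_count K.
Proof.
move=> K_size; rewrite /extension_count exchange_big /= big_distrr /=.
rewrite -[n in n + _]card_ord -sum1_card -big_split /=.
by apply: leq_sum => x _; apply: drop_extensions_le.
Qed.

(* Every independent (s+1)-set arises from exactly s+1 pairs (L, x). *)
Lemma sum_extension_count s :
  \sum_(L | indep_of_size s L) extension_count L = s.+1 * indep_count e s.+1.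
Proof.
under eq_bigr do rewrite -[extension_count _]muln1.
rewrite (double_count s (fun _ => 1)) indep_count_sum big_distrr /=.
by apply: eq_bigr => K /andP[/eqP K_card _]; rewrite sum1_card K_card muln1.
Qed.

Lemma indep_count_recurrence s :
  s.+1 ^ 2 * indep_count e s.+1 ^ 2 <=
  indep_count e s * (n * indep_count e s.+1 + s * (s.+2 * indep_count e s.+2)).
Proof.
have := cauchy_schwarz_nat (indep_of_size s) extension_count.
rewrite sum_extension_count -indep_count_sum -expnMn => /leq_trans; apply.
rewrite leq_mul2l; apply/orP; right.
have -> : \sum_(L | indep_of_size s L) extension_count L ^ 2 =
    \sum_(K | indep_of_size s.+1 K) \sum_(w in K) extension_count (K :\ w).
  by rewrite -double_count; apply: eq_bigr => L _; rewrite expnS expn1.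
rewrite -(sum_extension_count s.+1) (indep_count_sum s.+1) !big_distrr /=.
rewrite -big_split /=; apply: leq_sum => K K_size; rewrite muln1.
exact: sum_drop_extension_count.
Qed.

Hypothesis e_irr : irreflexive e.

Lemma independent1 v : independent [set v].
Proof. by apply/independentP => a b; rewrite !inE => /eqP-> /eqP->; rewrite e_irr. Qed.

Lemma sum_indep_singletons (g : {set 'I_n} -> nat) :
  \sum_(L | indep_of_size 1 L) g L = \sum_v g [set v].
Proof.
transitivity (\sum_(L | indep_of_size 1 L) \sum_(v | L == [set v]) g L).
  apply: eq_bigr => L /andP[/cards1P [u ->] _].
  by rewrite (big_pred1 u) // => v /=; rewrite (inj_eq set1_inj) eq_sym.
rewrite (exchange_big_dep xpredT) //=; apply: eq_bigr => v _.
rewrite (big_pred1 [set v]) // => L /=.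
by case: eqP => [->|]; rewrite ?andbF ?andbT // /indep_of_size cards1 independent1.
Qed.

Lemma indep_count1 : indep_count e 1 = n.
Proof. by rewrite indep_count_sum sum_indep_singletons sum1_card card_ord. Qed.

Hypothesis e_sym : symmetric e.

(* Independent 2-sets, counted twice, together with the ordered adjacent
   pairs, account for all ordered pairs of distinct vertices. *)
Lemma indep_count2 : 2 * indep_count e 2 + \sum_i \sum_j (e i j : nat) = n * n.-1.
Proof.
rewrite -sum_extension_count sum_indep_singletons -big_split /=.
rewrite -[n in n * _]card_ord -sum_nat_const; apply: eq_bigr => v _.
have -> : n.-1 = \sum_x (x != v : nat).
  rewrite -[n in n.-1]card_ord -(cardC1 v) -sum1_card big_mkcond /=.
  by apply: eq_bigr => x _; rewrite !inE; case: (x != v).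
rewrite /extension_count -big_split /=; apply: eq_bigr => x _; rewrite inE.
have [->|_] := eqVneq x v; first by rewrite e_irr.
have -> : independent (x |: [set v]) = ~~ e x v.
  apply/independentP/idP => [|not_xv a b]; first by apply; rewrite !inE eqxx ?orbT.
  by rewrite !inE => /orP[]/eqP-> /orP[]/eqP->; rewrite ?e_irr // e_sym.
by rewrite [e v x]e_sym; case: (e x v).
Qed.
End IndependentSets.

Local Open Scope ring_scope.

Lemma le_bigmax_norm (s : seq algC) (z : algC) : z \in s ->
  `|z| <= \big[Num.max/0]_(y <- s) `|y|.
Proof.
have bigmax_real t : \big[Num.max/0]_(y <- t) `|y| \is @Num.real algC.
  by elim/big_ind: _ => [|x y|x _]; rewrite ?real0 ?normr_real //; apply: max_real.
elim: s => [//|a s IHs]; rewrite inE big_cons => /orP[/eqP->|zs].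
  by rewrite comparable_le_max ?lexx // real_comparable ?normr_real.
by rewrite comparable_le_max ?real_comparable ?normr_real ?IHs ?orbT.
Qed.

(* Eigenvalues are roots of the characteristic polynomial, hence lie among
   the eigenvalues listed in the definition of the spectral radius. *)
Lemma eigenvalue_norm_le_radius n (A : 'M[algC]_n) (a : algC) :
  eigenvalue A a -> `|a| <= spectral_radius A.
Proof.
rewrite eigenvalue_root_char => char_a; apply: le_bigmax_norm.
rewrite /eigenvalues; case: closed_field_poly_normal => s /= chiA.
move: char_a; rewrite chiA rootZ ?root_prod_XsubC //.
by rewrite lead_coef_eq0 monic_neq0 ?char_poly_monic.
Qed.

Lemma sqr_normC_sum (I : finType) (y : I -> algC) :
  `|\sum_i y i| ^+ 2 = \sum_i \sum_j (y i)^* * y j.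
Proof.
rewrite normCKC rmorph_sum mulr_suml; apply: eq_bigr => i _.
by rewrite mulr_sumr.
Qed.

Section SpectralBound.
Local Open Scope sesquilinear_scope.

(* For a unitary P the squared moduli of the row sums of P add up to n:
   their total is the sum of all entries of P^* P = 1. *)

Lemma unitary_rowsum_norm n (P : 'M[algC]_n) : P \is unitarymx ->
  \sum_k `|\sum_j P k j| ^+ 2 = n%:R.
Proof.
move=> P_unitary.
have PtP : P ^t* *m P = 1%:M.
  by rewrite -(invmx_unitary P_unitary) mulVmx ?unitarymx_unit.
transitivity (\sum_i \sum_j (P ^t* *m P) i j).
  under eq_bigr => k _ do rewrite sqr_normC_sum.
  rewrite exchange_big; apply: eq_bigr => i _; rewrite exchange_big.
  by apply: eq_bigr => j _; rewrite !mxE; apply: eq_bigr => k _; rewrite !mxE.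
rewrite PtP -[n in n%:R]card_ord -sumr_const; apply: eq_bigr => i _.
rewrite (bigD1 i) //= big1 => [|j ji]; rewrite mxE ?eqxx ?addr0 //.
by rewrite eq_sym (negbTE ji).
Qed.

Section NormalMatrix.
Variables (n : nat) (A : 'M[algC]_n).
Hypothesis A_normal : A \is normalmx.

Let P := spectralmx A.
Let d := spectral_diag A.
Let P_unitary : P \is unitarymx := spectral_unitarymx A.

Let A_spectral : A = P ^t* *m diag_mx d *m P.
Proof. by rewrite -invmx_unitary //; apply/orthomx_spectralP. Qed.

(* The diagonal entries of the spectral decomposition are eigenvalues of A,
   with the rows of the unitary factor as eigenvectors. *)
Lemma spectral_diag_eigenvalue k : eigenvalue A (d 0 k).
Proof.
have PPt : P *m P ^t* = 1%:M by apply/unitarymxP.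
apply/eigenvalueP; exists (row k P).
  by rewrite -row_mul A_spectral !mulmxA PPt mul1mx row_mul row_diag_mx -scalemxAl -rowE.
apply/eqP => /(congr1 (mulmx^~ (P ^t*))); rewrite -row_mul PPt mul0mx.
by move/rowP/(_ k); rewrite !mxE eqxx => /eqP; rewrite oner_eq0.
Qed.

Lemma normalmx_sum_entries :
  \sum_i \sum_j A i j = \sum_k d 0 k * `|\sum_j P k j| ^+ 2.
Proof.
have Aij i j : A i j = \sum_k (P k i)^* * d 0 k * P k j.
  by rewrite A_spectral mxE; apply: eq_bigr => k _; rewrite mul_mx_diag !mxE.
under eq_bigr => i _ do rewrite (eq_bigr _ (fun j _ => Aij i j)) exchange_big.
rewrite exchange_big; apply: eq_bigr => k _; rewrite sqr_normC_sum mulr_sumr.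
apply: eq_bigr => i _; rewrite mulr_sumr; apply: eq_bigr => j _.
by rewrite mulrCA mulrA.
Qed.

Lemma normalmx_sum_entries_le :
  `|\sum_i \sum_j A i j| <= n%:R * spectral_radius A.
Proof.
rewrite normalmx_sum_entries -(unitary_rowsum_norm P_unitary) mulr_suml.
apply: le_trans (ler_norm_sum _ _ _) _; apply: ler_sum => k _.
rewrite normrM normrX normr_id mulrC ler_wpM2l ?exprn_ge0 //.
exact/eigenvalue_norm_le_radius/spectral_diag_eigenvalue.
Qed.

End NormalMatrix.

(* The adjacency matrix of a symmetric relation is Hermitian, hence normal:
   the number of ordered adjacent pairs is at most n lambda(G). *)
Lemma sum_adjacency_le n (e : rel 'I_n) : symmetric e ->
  ((\sum_i \sum_j (e i j : nat))%N)%:R <= n%:R * lambda_G e :> algC.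
Proof.
move=> e_sym.
have adj_normal : adjmx e \is normalmx.
  have adj_herm : (adjmx e) ^t* = adjmx e.
    by apply/matrixP => i j; rewrite !mxE conjC_nat e_sym.
  by apply/normalmxP; rewrite adj_herm.
have -> : ((\sum_i \sum_j (e i j : nat))%N)%:R = `|\sum_i \sum_j adjmx e i j|.
  rewrite -normr_nat natr_sum; congr `|_|; apply: eq_bigr => i _.
  by rewrite natr_sum; apply: eq_bigr => j _; rewrite mxE.
exact: normalmx_sum_entries_le.
Qed.

End SpectralBound.

Lemma adjacent_pairs_bound n (e : rel 'I_n) (alpha : nat) :
  symmetric e -> (0 < alpha)%N -> lambda_G e <= n%:R / alpha%:R ->
  ((\sum_i \sum_j (e i j : nat)) * alpha <= n ^ 2)%N.
Proof.
move=> e_sym alpha_gt0 lambda_le; rewrite -(ler_nat algC) natrM natrX.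
have alpha_ge0 : 0 <= alpha%:R :> algC by apply: ler0n.
apply: le_trans (ler_wpM2r alpha_ge0 (sum_adjacency_le e_sym)) _.
have := ler_wpM2r alpha_ge0 lambda_le; rewrite divfK ?pnatr_eq0 -?lt0n // => nlambda.
by rewrite -mulrA expr2 ler_wpM2l.
Qed.

(* The numeric part: K : nat -> R is a nonnegative sequence in a real field,
   to be instantiated with the counts of independent sets. *)
Section RealRecurrence.
Variables (R : realFieldType) (N c : R) (K : nat -> R).
Hypothesis K_ge0 : forall s, 0 <= K s.

(* Under the quadratic recurrence, a linear lower bound on K s.+2 in terms of
   K s.+1 propagates from s to s.+1: dividing the recurrence at s.+1 by
   s.+1 * K s.+1 and inserting the bound at s gives the bound at s.+1. *)
Lemma linear_recurrence :
  (forall s, s.+1%:R ^+ 2 * K s.+1 ^+ 2 <=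
             K s * (N * K s.+1 + s%:R * (s.+2%:R * K s.+2))) ->
  N * (1 - c) * K 1 <= 2 * K 2 ->
  forall s, N * (1 - s.+1%:R * c) * K s.+1 <= s.+2%:R * K s.+2.
Proof.
move=> K_rec K_base; elim=> [|s IHs]; first by rewrite mul1r.
have rec := K_rec s.+1.
have [K1_eq0|K1_neq0] := eqVneq (K s.+1) 0.
  have : K s.+2 ^+ 2 <= 0.
    have s2_gt0 : 0 < s.+2%:R ^+ 2 :> R by rewrite exprn_gt0 ?ltr0Sn.
    move: rec; rewrite K1_eq0; nra.
  rewrite real_exprn_even_le0 ?num_real // => /eqP->.
  by rewrite mulr0 mulr_ge0 ?ler0n.
have K1_gt0 : 0 < K s.+1 by rewrite lt_def K1_neq0 K_ge0.
have s1_gt0 : 0 < s.+1%:R :> R by rewrite ltr0Sn.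
rewrite -(ler_pM2l (mulr_gt0 s1_gt0 K1_gt0)).
have IH_scaled : 0 <= K s.+2 * s.+2%:R *
    (s.+2%:R * K s.+2 - N * (1 - s.+1%:R * c) * K s.+1).
  by rewrite !mulr_ge0 ?ler0n ?K_ge0 // subr_ge0.
move: rec IH_scaled; rewrite -!natr1.
nra.
Qed.

Lemma binomial_lower_bound (r : nat) :
  0 < N -> r%:R * c <= 1 -> K 1 = N ->
  (forall s, N * (1 - s.+1%:R * c) * K s.+1 <= s.+2%:R * K s.+2) ->
  forall t, (t.+1 <= r)%N -> 'C(r, t.+1)%:R * (N / r%:R) ^+ t.+1 <= K t.+1.
Proof.
move=> N_gt0 rc_le1 K1 K_lin; elim=> [|t IHt] t_lt_r.
  have r_neq0 : r%:R != 0 :> R by rewrite pnatr_eq0 -lt0n.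
  by rewrite bin1 expr1 mulrC divfK // K1.
have r_gt0 : 0 < r%:R :> R by rewrite ltr0n (leq_ltn_trans _ t_lt_r).
have IH := IHt (ltnW t_lt_r).
have binS : t.+2%:R * 'C(r, t.+2)%:R = (r%:R - t.+1%:R) * 'C(r, t.+1)%:R :> R.
  by rewrite -natrM mul_bin_left natrM natrB // ltnW.
rewrite -(ler_pM2l (ltr0Sn R t.+1)) mulrA binS; apply: le_trans (K_lin t).
set u := N / r%:R; have N_eq : N = r%:R * u by rewrite /u mulrC divfK ?gt_eqF.
have u_ge0 : 0 <= u by rewrite divr_ge0 ?ltW.
have q_le : r%:R - t.+1%:R <= r%:R * (1 - t.+1%:R * c).
  have : t.+1%:R * (r%:R * c) <= t.+1%:R * 1 by rewrite ler_wpM2l ?ler0n.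
  lra.
have q_ge0 : 0 <= r%:R - t.+1%:R :> R by rewrite -natrB ?ler0n // ltnW.
rewrite -/u in IH; rewrite -/u exprS N_eq; move: IH q_le q_ge0.
set C := 'C(r, t.+1)%:R; set x := u ^+ t.+1; set q := r%:R - t.+1%:R.
set y := 1 - t.+1%:R * c; set Kt := K t.+1 => IH q_le q_ge0.
have Kt_ge0 : 0 <= Kt by apply: K_ge0.
have -> : q * C * (u * x) = q * (u * (C * x)) by ring.
have -> : r%:R * u * y * Kt = r%:R * y * (u * Kt) by ring.
apply: (@le_trans _ _ (q * (u * Kt))); first by do 2 apply: ler_wpM2l => //.
by rewrite ler_wpM2r // mulr_ge0.
Qed.

Lemma growth_bound (r : nat) : 0 < N -> (0 < r)%N -> r%:R * c <= 1 -> K 1 = N ->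
  (forall s, N * (1 - s.+1%:R * c) * K s.+1 <= s.+2%:R * K s.+2) ->
  N * (1 - r%:R * c) * (N / r%:R) ^+ r <= r.+1%:R * K r.+1.
Proof.
move=> N_gt0 r_gt0 rc_le1 K1 K_lin.
have := binomial_lower_bound N_gt0 rc_le1 K1 K_lin (t := r.-1).
rewrite prednK // binn mul1r => /(_ (leqnn r)) K_r.
have := K_lin r.-1; rewrite prednK // => /(le_trans _); apply.
by apply: ler_wpM2l => //; apply: mulr_ge0; [exact: ltW | rewrite subr_ge0].
Qed.

End RealRecurrence.

Lemma first_linear_bound (R : realFieldType) (N a S : R) (K : nat -> R) :
  0 < N -> 0 < a -> S * a <= N ^+ 2 -> 2 * K 2 + S = N * (N - 1) -> K 1 = N ->
  N * (1 - (N^-1 + a^-1)) * K 1 <= 2 * K 2.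
Proof.
move=> N_gt0 a_gt0 Sa_le K2_eq K1.
have S_le : S <= N ^+ 2 / a by rewrite ler_pdivlMr.
have -> : N * (1 - (N^-1 + a^-1)) * K 1 = N * (N - 1) - N ^+ 2 / a.
  by rewrite K1; field; rewrite !gt_eqF.
by rewrite -K2_eq lerBlDr lerD2l.
Qed.

Lemma one_sub_rc (R : realFieldType) (N : R) (r : nat) : 0 < N -> (0 < r)%N ->
  1 - r%:R * (N^-1 + r.+1%:R^-1) = r%:R * ((r.+1%:R * r%:R)^-1 - N^-1).
Proof.
move=> N_gt0 r_gt0; rewrite -natr1; field.
by rewrite natr1 pnatr_eq0 -lt0n r_gt0 !gt_eqF ?ltr0Sn.
Qed.

(* Rescaling to the shape of the theorem (a = r + 1, c and d as above):
   N (1 - r c) (N/r)^r <= a x implies d (r (r-1) / a) (N/r)^a <= x, since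
   N (1 - r c) (N/r)^r = r^2 d (N/r)^(r+1) >= r (r-1) d (N/r)^(r+1). *)
Lemma final_rescaling (R : realFieldType) (N x : R) (r : nat) :
  0 < N -> (0 < r)%N -> 0 <= (r.+1%:R * r%:R)^-1 - N^-1 ->
  N * (1 - r%:R * (N^-1 + r.+1%:R^-1)) * (N / r%:R) ^+ r <= r.+1%:R * x ->
  ((r.+1%:R * r%:R)^-1 - N^-1) * (r%:R * (r%:R - 1) / r.+1%:R) * (N / r%:R) ^+ r.+1
    <= x.
Proof.
move=> N_gt0 r_gt0; set a := r.+1%:R; set d := _ - N^-1; set u := N / r%:R.
move=> d_ge0 bound.
have a_gt0 : 0 < a by rewrite ltr0Sn.
have r_neq0 : r%:R != 0 :> R by rewrite pnatr_eq0 -lt0n.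
have -> : d * (r%:R * (r%:R - 1) / a) * u ^+ r.+1 =
    (N * (r%:R * d) * u ^+ r) / a - d * N * u ^+ r / a.
  by rewrite exprS /u /a; field; rewrite nat1r r_neq0 gt_eqF ?ltr0Sn.
rewrite lerBlDr; apply: ler_wpDr.
  have u_ge0 : 0 <= u by apply: divr_ge0; [exact: ltW | exact: ler0n].
  by do ?apply: mulr_ge0; rewrite ?invr_ge0 ?exprn_ge0 // ltW.
by rewrite ler_pdivrMr // [x * a]mulrC -one_sub_rc.
Qed.

Lemma lower_bound_from_counts (R : realFieldType) (n al S : nat) (k : nat -> nat) :
  (2 <= al)%N -> (S * al <= n ^ 2)%N -> (2 * k 2 + S = n * n.-1)%N -> k 1%N = n ->
  (forall s, s.+1 ^ 2 * k s.+1 ^ 2 <= k s * (n * k s.+1 + s * (s.+2 * k s.+2)))%N ->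
  ((al%:R * (al%:R - 1))^-1 - n%:R^-1) * ((al%:R - 1) * (al%:R - 2) / al%:R)
    * (n%:R / (al%:R - 1)) ^+ al <= (k al)%:R :> R.
Proof.
case: al => [//|r] r_gt0 Sal_le k2_eq k1 k_rec.
have -> : r.+1%:R - 1 = r%:R :> R by rewrite -natr1 addrK.
have -> : r.+1%:R - 2 = r%:R - 1 :> R by rewrite -natr1; lra.
case: n k2_eq k1 k_rec Sal_le => [|n] k2_eq k1 k_rec Sal_le.
  by rewrite mul0r expr0n /= mulr0 ler0n.
set N := n.+1%:R; have N_gt0 : 0 < N by rewrite ltr0Sn.
have [d_lt0|d_ge0] := ltrP ((r.+1%:R * r%:R)^-1 - N^-1) 0.
  apply: le_trans (ler0n _ _); rewrite -mulrA nmulr_rle0 //.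
  apply: mulr_ge0; last by rewrite exprn_ge0 // divr_ge0 ?ler0n ?ltW.
  by rewrite divr_ge0 ?ler0n // mulr_ge0 ?ler0n // subr_ge0 ler1n.
apply: final_rescaling => //.
set K := fun s => (k s)%:R : R.
have K_ge0 s : 0 <= K s by apply: ler0n.
have K1 : K 1%N = N by rewrite /K /= k1.
have K_rec s : s.+1%:R ^+ 2 * K s.+1 ^+ 2 <=
               K s * (N * K s.+1 + s%:R * (s.+2%:R * K s.+2)).
  by have := k_rec s; rewrite -(ler_nat R) !(natrM, natrD, natrX).
have K_base : N * (1 - (N^-1 + r.+1%:R^-1)) * K 1 <= 2 * K 2.
  apply: (@first_linear_bound _ _ _ S%:R) => //.
  - by have := Sal_le; rewrite -(ler_nat R) natrM natrX.
  - have -> : N - 1 = n%:R by rewrite /N -natr1 addrK.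
    by rewrite /K /N -!natrM -natrD k2_eq.
apply: (growth_bound K_ge0) => //; first by rewrite -subr_ge0 one_sub_rc // mulr_ge0.
exact: linear_recurrence.
Qed.

Theorem theorem2p4 (n : nat) (e : rel 'I_n) (alpha : nat) :
  simple_graph e -> (2 <= alpha)%N ->
  lambda_G e <= n%:R / alpha%:R ->
  ((alpha%:R * (alpha%:R - 1))^-1 - (n%:R)^-1)
    * ((alpha%:R - 1) * (alpha%:R - 2) / alpha%:R)
    * (n%:R / (alpha%:R - 1)) ^+ alpha
  <= (indep_count e alpha)%:R :> algC.
Proof.
move=> [e_sym e_irr] alpha_ge2 lambda_le.
have pairs := adjacent_pairs_bound e_sym (ltnW alpha_ge2) lambda_le.
have := lower_bound_from_counts rat alpha_ge2 pairs (indep_count2 e_irr e_sym)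
  (indep_count1 e_irr) (@indep_count_recurrence n e).
rewrite -(ler_rat algC) !(rmorphM, rmorphB, fmorphV, rmorphXn, rmorph1) /=.
by rewrite !rmorph_nat.
Qed.
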